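(* Let $g(z)=z^3-z^2+7z+1$, $A=\{z\in\mathbb{C}:\Re z\le0,\ |g(z)|=1\}$ and $B=\{z\in\mathbb{C}:\Re z>0,\ |g(z)|=1\}$. Then $\Re(A)\subset[-0.275,0]$ and $\Re(B)\subset[0.495,0.64]$. Moreover, $z=0$ is the only element $z\in A$ with $\Re(z)=0$. *)

From Stdlib Require Import Reals.
From Coquelicot Require Import Coquelicot.
Open Scope R_scope.

Definition g (z : C) : C :=
  (z * z * z - z * z + RtoC 7 * z + RtoC 1)%C.

Definition setA (z : C) : Prop := Re z <= 0 /\ Cmod (g z) = 1.
Definition setB (z : C) : Prop := 0 < Re z /\ Cmod (g z) = 1.

(** Write z = x + iy and t = y^2.  Then |g(z)|^2 - 1 is a monic cubic in t
    whose coefficients are polynomials in x, so it suffices to show that this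
    cubic is positive for all t >= 0 whenever x lies outside the claimed
    ranges.  Writing the cubic as t (t^2 + b t + c) + d, for x < -0.275 and
    for x >= 2 the quadratic has negative discriminant and d > 0.  For 0 < x < 0.495 and
    0.64 < x <= 2 we split t at a fixed T and expand around a fixed m near the
    local minimum in t; what remains is the positivity in x of one
    polynomial of degree 8 on two intervals, certified by its Bernstein
    coefficients.  On the imaginary axis the cubic is t ((t - 13/2)^2 + 35/4),
    which vanishes only at t = 0. *)

From Stdlib Require Import Reals Lra Psatz List.
From Coquelicot Require Import Coquelicot.
Import ListNotations.
Open Scope R_scope.

Definition cubic (b c d t : R) : R := t ^ 3 + b * t ^ 2 + c * t + d.

Definition cubic_deriv (b c t : R) : R := 3 * t ^ 2 + 2 * b * t + c.

Lemma quadratic_pos (k q r u : R) :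
  0 < k -> 0 < 4 * k * r - q ^ 2 -> 0 < k * u ^ 2 + q * u + r.
Proof.
  intros Hk Hdisc.
  assert (E : 4 * k * (k * u ^ 2 + q * u + r) = (2 * k * u + q) ^ 2 + (4 * k * r - q ^ 2))
    by ring.
  assert (H4 : 0 < 4 * k * (k * u ^ 2 + q * u + r))
    by (rewrite E; pose proof (pow2_ge_0 (2 * k * u + q)); lra).
  apply (Rmult_lt_reg_l (4 * k)); lra.
Qed.

Lemma cubic_pos_of_discr (b c d t : R) :
  0 <= t -> 0 < 4 * c - b ^ 2 -> 0 < d -> 0 < cubic b c d t.
Proof.
  intros Ht Hdisc Hd.
  assert (E : 4 * cubic b c d t = t * ((2 * t + b) ^ 2 + (4 * c - b ^ 2)) + 4 * d)
    by (unfold cubic; ring).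
  assert (0 <= t * ((2 * t + b) ^ 2 + (4 * c - b ^ 2)))
    by (apply Rmult_le_pos; [| pose proof (pow2_ge_0 (2 * t + b))]; lra).
  lra.
Qed.

(* For t <= T the quadratic t^2 + b t + c is decreasing, hence bounded below by
   its value at T; for t >= T, writing u = t - m, the cubic is
   u^2 (t + 2m + b) + p'(m) u + p(m), which dominates a quadratic in u with
   leading coefficient T + 2m + b. *)
Lemma cubic_pos_of_split (b c d T m t : R) :
  0 <= t -> b + 2 * T <= 0 -> 0 < T ^ 2 + b * T + c -> 0 < d ->
  0 < T + 2 * m + b ->
  0 < 4 * (T + 2 * m + b) * cubic b c d m - cubic_deriv b c m ^ 2 ->
  0 < cubic b c d t.
Proof.
  intros Ht Hb HT Hd Hk Hdisc.
  destruct (Rle_lt_dec t T) as [HtT | HTt].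
  - assert (Hq : T ^ 2 + b * T + c <= t ^ 2 + b * t + c) by nra.
    assert (E : cubic b c d t = t * (t ^ 2 + b * t + c) + d) by (unfold cubic; ring).
    nra.
  - set (u := t - m).
    assert (E : cubic b c d t
                = u ^ 2 * (t + 2 * m + b) + cubic_deriv b c m * u + cubic b c d m)
      by (unfold u, cubic, cubic_deriv; ring).
    assert (0 < (T + 2 * m + b) * u ^ 2 + cubic_deriv b c m * u + cubic b c d m)
      by (apply quadratic_pos; assumption).
    assert (0 <= u ^ 2 * (t - T)) by (apply Rmult_le_pos; [apply pow2_ge_0 | lra]).
    nra.
Qed.

(* [bernstein [c_0; ...; c_n] s] is the sum of the c_k s^k (1 - s)^(n - k);
   the binomial factors are absorbed into the coefficients. *)
Fixpoint bernstein (cs : list R) (s : R) : R :=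
  match cs with
  | [] => 0
  | c :: cs' => c * (1 - s) ^ length cs' + s * bernstein cs' s
  end.

Lemma bernstein_pos (cs : list R) (s : R) :
  cs <> [] -> List.Forall (Rlt 0) cs -> 0 <= s <= 1 -> 0 < bernstein cs s.
Proof.
  intros Hne Hpos Hs.
  induction Hpos as [| c cs' Hc Hpos' IH]; [congruence |].
  destruct cs' as [| c' cs'']; [simpl; lra |].
  specialize (IH ltac:(discriminate)).
  change (0 < c * (1 - s) ^ length (c' :: cs'') + s * bernstein (c' :: cs'') s).
  set (n := length (c' :: cs'')).
  destruct (Req_dec s 1) as [-> | Hs1].
  - assert (0 <= (1 - 1) ^ n) by (apply pow_le; lra). nra.
  - assert (0 < (1 - s) ^ n) by (apply pow_lt; lra). nra.
Qed.

Lemma pos_of_bernstein (p : R -> R) (a e : R) (cs : list R) :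
  a < e -> (forall s, p (a + (e - a) * s) = bernstein cs s) ->
  cs <> [] -> List.Forall (Rlt 0) cs ->
  forall x, a <= x <= e -> 0 < p x.
Proof.
  intros Hae Hp Hne Hpos x Hx.
  replace x with (a + (e - a) * ((x - a) / (e - a)))
    by (field; apply Rgt_not_eq; lra).
  rewrite Hp; apply bernstein_pos; [assumption | assumption |].
  split.
  - apply Rdiv_le_0_compat; lra.
  - apply (Rdiv_le_1 (x - a) (e - a)); lra.
Qed.

Definition a2 (x : R) : R := 3 * x ^ 2 - 2 * x - 13.
Definition a1 (x : R) : R := 3 * x ^ 4 - 4 * x ^ 3 + 2 * x ^ 2 - 20 * x + 51.
Definition a0 (x : R) : R := (x ^ 3 - x ^ 2 + 7 * x) * (x ^ 3 - x ^ 2 + 7 * x + 2).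

Definition gcubic (x t : R) : R := cubic (a2 x) (a1 x) (a0 x) t.

Lemma Cmod_g_sqr (x y : R) : Cmod (g (x, y)) ^ 2 = 1 + gcubic x (y ^ 2).
Proof.
  unfold Cmod; rewrite pow2_sqrt by (apply Rplus_le_le_0_compat; apply pow2_ge_0).
  unfold g, gcubic, cubic, a2, a1, a0; simpl; ring.
Qed.

Lemma gcubic_of_Cmod_g_eq1 (x y : R) : Cmod (g (x, y)) = 1 -> gcubic x (y ^ 2) = 0.
Proof. intros Hg. pose proof (Cmod_g_sqr x y) as E. rewrite Hg in E. lra. Qed.

Lemma gcubic_0 (t : R) : gcubic 0 t = t * ((t - 13 / 2) ^ 2 + 35 / 4).
Proof. unfold gcubic, cubic, a2, a1, a0; field. Qed.

Lemma a0_pos_left (x : R) : x < -275/1000 -> 0 < a0 x.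
Proof.
  intros Hx. unfold a0.
  assert (x ^ 3 - x ^ 2 + 7 * x < -2) by nra.
  nra.
Qed.

Lemma a0_pos_right (x : R) : 0 < x -> 0 < a0 x.
Proof. intros Hx. unfold a0. nra. Qed.

Lemma discr_pos_of_nonpos (x : R) : x <= 0 -> 0 < 4 * a1 x - a2 x ^ 2.
Proof. intros Hx. unfold a1, a2. nra. Qed.

Lemma discr_pos_of_ge2 (x : R) : 2 <= x -> 0 < 4 * a1 x - a2 x ^ 2.
Proof. intros Hx. unfold a1, a2. nra. Qed.

(* Found by a grid search; m is close to the positive critical point of
   [gcubic x] for x near the ends of the two ranges. *)
Definition split_T : R := 49/20.
Definition split_m : R := 341/50.

Definition split_disc (x : R) : R :=
  4 * (split_T + 2 * split_m + a2 x) * gcubic x split_m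
  - cubic_deriv (a2 x) (a1 x) split_m ^ 2.

Lemma a2_add_2split_T_nonpos (x : R) : 0 <= x <= 2 -> a2 x + 2 * split_T <= 0.
Proof. intros Hx. unfold a2, split_T. nra. Qed.

Lemma split_T_quadratic_pos (x : R) :
  0 <= x <= 2 -> 0 < split_T ^ 2 + a2 x * split_T + a1 x.
Proof. intros Hx. unfold a1, a2, split_T. nra. Qed.

Lemma split_slope_pos (x : R) : 0 < split_T + 2 * split_m + a2 x.
Proof. unfold a2, split_T, split_m. nra. Qed.

Lemma split_disc_pos_near0 (x : R) : 0 <= x <= 99/200 -> 0 < split_disc x.
Proof.
  apply (pos_of_bernstein split_disc 0 (99/200)
    [3572002829/6250000; 22710832477/6250000; 4906932256087/500000000;
     18147937540643/1250000000; 3152335864747691/250000000000;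
     25404434523703633/4000000000000; 2690040702261074309/1600000000000000;
     278413958847087919/1600000000000000; 3091288924647893603/2560000000000000000]).
  - lra.
  - intro s. unfold split_disc, split_T, split_m, gcubic, cubic, cubic_deriv, a2, a1, a0.
    simpl; field.
  - discriminate.
  - repeat constructor; lra.
Qed.

Lemma split_disc_pos_right (x : R) : 16/25 <= x <= 2 -> 0 < split_disc x.
Proof.
  apply (pos_of_bernstein split_disc (16/25) 2
    [6778186733/2441406250000; 5789965012531/12207031250; 203868325771651/24414062500;
     22022959705237/488281250; 237837137608807/1953125000; 147550659069/781250;
     1350195582407/7812500; 68341194579/781250; 118786998829/6250000]).
  - lra.
  - intro s. unfold split_disc, split_T, split_m, gcubic, cubic, cubic_deriv, a2, a1, a0.
    simpl; field.
  - discriminate.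
  - repeat constructor; lra.
Qed.

Lemma gcubic_pos_of_split_disc (x t : R) :
  0 < x <= 2 -> 0 < split_disc x -> 0 <= t -> 0 < gcubic x t.
Proof.
  intros Hx Hdisc Ht.
  apply (cubic_pos_of_split _ _ _ split_T split_m t Ht).
  - apply a2_add_2split_T_nonpos; lra.
  - apply split_T_quadratic_pos; lra.
  - apply a0_pos_right; lra.
  - apply split_slope_pos.
  - exact Hdisc.
Qed.

Lemma gcubic_pos_left (x t : R) : x < -275/1000 -> 0 <= t -> 0 < gcubic x t.
Proof.
  intros Hx Ht.
  apply cubic_pos_of_discr; [exact Ht | apply discr_pos_of_nonpos; lra |].
  apply a0_pos_left; exact Hx.
Qed.

Lemma gcubic_pos_near0 (x t : R) : 0 < x < 99/200 -> 0 <= t -> 0 < gcubic x t.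
Proof.
  intros Hx.
  apply gcubic_pos_of_split_disc; [lra |].
  apply split_disc_pos_near0; lra.
Qed.

Lemma gcubic_pos_right (x t : R) : 16/25 < x -> 0 <= t -> 0 < gcubic x t.
Proof.
  intros Hx Ht.
  destruct (Rle_lt_dec x 2) as [Hx2 | Hx2].
  - apply gcubic_pos_of_split_disc; [lra | | exact Ht].
    apply split_disc_pos_right; lra.
  - apply cubic_pos_of_discr; [exact Ht | apply discr_pos_of_ge2; lra |].
    apply a0_pos_right; lra.
Qed.

Lemma Cmod_g_eq1_Re_range (x y : R) :
  Cmod (g (x, y)) = 1 -> -275/1000 <= x <= 0 \/ 99/200 <= x <= 16/25.
Proof.
  intros Hg.
  assert (Hnpos : ~ 0 < gcubic x (y ^ 2))
    by (rewrite (gcubic_of_Cmod_g_eq1 x y Hg); lra).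
  pose proof (pow2_ge_0 y) as Hy.
  destruct (Rlt_or_le x (-275/1000)) as [H1 | H1].
  { exfalso; exact (Hnpos (gcubic_pos_left x _ H1 Hy)). }
  destruct (Rle_or_lt x 0) as [H2 | H2]; [left; lra | right].
  destruct (Rlt_or_le x (99/200)) as [H3 | H3].
  { exfalso; exact (Hnpos (gcubic_pos_near0 x _ (conj H2 H3) Hy)). }
  destruct (Rle_or_lt x (16/25)) as [H4 | H4]; [lra |].
  exfalso; exact (Hnpos (gcubic_pos_right x _ H4 Hy)).
Qed.

Lemma Cmod_g_eq1_imag_axis (y : R) : Cmod (g (0, y)) = 1 -> y = 0.
Proof.
  intros Hg.
  pose proof (gcubic_of_Cmod_g_eq1 0 y Hg) as H0.
  rewrite gcubic_0 in H0.
  pose proof (pow2_ge_0 (y ^ 2 - 13 / 2)).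
  assert (Hy2 : y ^ 2 = 0) by nra.
  apply Rsqr_0_uniq; unfold Rsqr; nra.
Qed.

Theorem lemma3p6 :
  (forall z : C, setA z -> -275/1000 <= Re z <= 0) /\
  (forall z : C, setB z -> 495/1000 <= Re z <= 64/100) /\
  (forall z : C, setA z -> Re z = 0 -> z = 0%C).
Proof.
  split; [| split].
  - intros [x y] [Hx Hg]; simpl in *.
    destruct (Cmod_g_eq1_Re_range x y Hg); lra.
  - intros [x y] [Hx Hg]; simpl in *.
    destruct (Cmod_g_eq1_Re_range x y Hg); lra.
  - intros [x y] [_ Hg] Hx; simpl in Hx; subst x.
    rewrite (Cmod_g_eq1_imag_axis y Hg); reflexivity.
Qed.
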